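(* There is an absolute constant $C>0$ such that for all integers $n\ge 3$ and $m$ with $n-1\le m\le (n-1)^2/4$, $$\tilde{r}(\mathcal C_{\mathrm{odd}},\mathcal{C}on_{n,m})\le n+2m+C\sqrt{m-n+1}.$$
   Context: Given nonempty families $\mathcal H_1,\mathcal H_2$ of finite graphs, the online size Ramsey game $\mathcal R(\mathcal H_1,\mathcal H_2)$ is played on the edge set of the infinite complete graph $K_{\mathbb N}$: in each round Builder selects a previously unselected edge and Painter colours it red or blue. The game ends as soon as there is a red copy of some graph in $\mathcal H_1$ or a blue copy of some graph in $\mathcal H_2$. Builder tries to end the game as soon as possible, Painter tries to delay it, and $\tilde r(\mathcal H_1,\mathcal H_2)$ is the number of rounds under optimal play. $\mathcal C_{\mathrm{odd}}$ is the family of all odd cycles and $\mathcal{C}on_{n,m}$ is the family of all connected graphs with exactly $n$ vertices and at least $m$ edges. (The paper states the bound as $n+2m+O(\sqrt{m-n+1})$.) *)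

From mathcomp Require Import all_boot.
Set Implicit Arguments. Unset Strict Implicit. Unset Printing Implicit Defensive.

(* A finite graph is given on vertex set 'I_k by an adjacency relation.
   A family of finite graphs is a predicate on such graphs. *)
Definition graph_family := forall k : nat, rel 'I_k -> Prop.

Definition simple_graph (k : nat) (adj : rel 'I_k) : Prop :=
  symmetric adj /\ irreflexive adj.

(* Game state: the list of coloured edges selected so far.
   An edge of K_N is stored as (u, v) with u < v; colour true = red,
   false = blue. *)
Definition state := seq (nat * nat * bool).

Definition has_edge (s : state) (c : bool) (x y : nat) : bool :=
  (minn x y, maxn x y, c) \in s.

Definition contains_copy (s : state) (c : bool) (k : nat) (adj : rel 'I_k) : Prop :=
  exists f : 'I_k -> nat, injective f /\
    forall i j, adj i j -> has_edge s c (f i) (f j).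

Definition has_copy (H : graph_family) (s : state) (c : bool) : Prop :=
  exists k (adj : rel 'I_k), H k adj /\ contains_copy s c adj.

Definition game_over (H1 H2 : graph_family) (s : state) : Prop :=
  has_copy H1 s true \/ has_copy H2 s false.

Definition unselected (s : state) (u v : nat) : bool :=
  ((u, v, true) \notin s) && ((u, v, false) \notin s).

Fixpoint builder_wins (H1 H2 : graph_family) (t : nat) (s : state) : Prop :=
  game_over H1 H2 s \/
  match t with
  | 0 => False
  | t'.+1 => exists u v : nat, u < v /\ unselected s u v /\
              forall c : bool, builder_wins H1 H2 t' ((u, v, c) :: s)
  end.

Definition online_ramsey_le (H1 H2 : graph_family) (t : nat) : Prop :=
  builder_wins H1 H2 t [::].

Definition cycle_adj (k : nat) : rel 'I_k :=
  fun i j => (j == (i.+1 %% k) :> nat) || (i == (j.+1 %% k) :> nat).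

Definition C_odd : graph_family :=
  fun k adj => [/\ odd k, 3 <= k & adj = @cycle_adj k].

Definition num_edges (k : nat) (adj : rel 'I_k) : nat :=
  #|[set p : 'I_k * 'I_k | (p.1 < p.2) && adj p.1 p.2]|.

Definition connected_graph (k : nat) (adj : rel 'I_k) : Prop :=
  forall i j : 'I_k, connect adj i j.

Definition Con (n m : nat) : graph_family :=
  fun k adj => [/\ k = n, simple_graph adj, connected_graph adj & m <= num_edges adj].

(* Builder first queries the edges 0x, x = 1, 2, ..., until vertex 0 has n - 1
   blue or n red neighbours, which takes at most 2n - 2 rounds. In the red case
   he picks one red neighbour h and queries h y for the n - 1 others y: a red
   answer closes a red triangle, so all these edges end up blue. Either way
   there is a hub joined in blue to a set V of n - 1 vertices, and it remains to
   force d = m - n + 1 blue edges inside V.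

   For this, Builder keeps V partitioned into the red components he knows, each
   properly 2-coloured and certified by red walks of matching parity, and asks
   for an uncoloured pair of equally coloured vertices. A red answer inside a
   class closes an odd closed walk, hence an odd cycle; a red answer across
   classes merges two classes, which happens at most n - 2 times; a blue answer
   is progress. Such a pair exists while fewer than d pairs are blue, since
   differently coloured pairs number at most (n - 1)^2/4 and 4m <= (n - 1)^2.
   Builder thus wins within 2n + m - 2 <= n + 2m rounds. *)

From Stdlib Require Import Reals Lra.
From mathcomp Require Import all_boot zify.
Set Implicit Arguments. Unset Strict Implicit. Unset Printing Implicit Defensive.

Section Walks.
Variables (T : eqType) (R : rel T).

Definition walk x y (b : bool) :=
  exists p, [/\ path R x p, last x p = y & odd (size p) = b].

Lemma walk0 x : walk x x false.
Proof. by exists [::]. Qed.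

Lemma walk1 x y : R x y -> walk x y true.
Proof. by exists [:: y]; rewrite /= andbT. Qed.

Lemma walk_cat x y z b c : walk x y b -> walk y z c -> walk x z (b (+) c).
Proof.
move=> [p [Rp <- <-]] [q [Rq <- <-]].
by exists (p ++ q); rewrite cat_path last_cat size_cat oddD Rp Rq.
Qed.

Lemma walk_sym x y b : symmetric R -> walk x y b -> walk y x b.
Proof.
move=> symR [p [Rp <- <-]]; exists (rev (belast x p)); split.
- by rewrite rev_path (eq_path (_ : _ =2 R)).
- by case: p {Rp} => //= z p; rewrite rev_cons last_rcons.
- by rewrite size_rev size_belast.
Qed.

Lemma not_uniq_split (s : seq T) :
  ~~ uniq s -> exists y s1 s2 s3, s = s1 ++ y :: s2 ++ y :: s3.
Proof.
elim: s => //= x s IHs; rewrite negb_and negbK => /orP[/splitPr[s2 s3] | /IHs].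
  by exists x, [::], s2, s3.
by case=> y [s1 [s2 [s3 ->]]]; exists y, (x :: s1), s2, s3.
Qed.

Lemma cycle_split s1 y s2 s3 :
  cycle R (s1 ++ y :: s2 ++ y :: s3) -> cycle R (rcons s2 y) /\ cycle R (s1 ++ y :: s3).
Proof.
rewrite !(cycle_path y) !last_cat /= last_cat /= last_rcons !cat_path /=.
by rewrite cat_path /= rcons_path => /and5P[-> -> -> -> ->].
Qed.

Lemma odd_cycle_uniq c :
  cycle R c -> odd (size c) -> exists2 c', cycle R c' & uniq c' && odd (size c').
Proof.
have [n] := ubnP (size c); elim: n c => // n IHn c ltcn Rc odd_c.
have [uc | /not_uniq_split[y [s1 [s2 [s3 def_c]]]]] := boolP (uniq c).
  by exists c; rewrite ?uc.
move: Rc ltcn odd_c; rewrite def_c => /cycle_split[R2 R13].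
rewrite !size_cat /= size_cat /= => ltcn odd_c.
have [odd2 | even2] := boolP (odd (size (rcons s2 y))).
  by apply: IHn R2 odd2; rewrite size_rcons; lia.
apply: IHn R13 _; rewrite size_cat /=; move: even2; rewrite size_rcons; lia.
Qed.

Lemma closed_walk_odd_cycle x :
  walk x x true -> exists2 c, cycle R c & uniq c && odd (size c).
Proof.
case=> p [Rp lastp oddp]; apply: odd_cycle_uniq oddp.
by rewrite (cycle_path x) lastp.
Qed.

End Walks.

Lemma sub_walk (T : eqType) (R R' : rel T) x y b :
  subrel R R' -> walk R x y b -> walk R' x y b.
Proof. by move=> sRR' [p [Rp ? ?]]; exists p; split=> //; apply: sub_path Rp. Qed.

Lemma nth_ord_inj (T : eqType) (x0 : T) N (l : seq T) :
  uniq l -> size l = N -> injective (fun i : 'I_N => nth x0 l i).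
Proof. by move=> uniq_l size_l i j /eqP; rewrite nth_uniq ?size_l // => /eqP/val_inj. Qed.

Section PairCounting.
Variable N : nat.
Implicit Type col : 'I_N -> bool.

Lemma card_ltn_pairs : (#|[set p : 'I_N * 'I_N | p.1 < p.2]|).*2 + N = N * N.
Proof.
set LT := [set p : 'I_N * 'I_N | p.1 < p.2].
have swapK : involutive (fun p : 'I_N * 'I_N => (p.2, p.1)) by case.
have card_gtn : #|[set p : 'I_N * 'I_N | p.2 < p.1]| = #|LT|.
  by rewrite -(card_preimset _ (inv_inj swapK)); apply: eq_card => p; rewrite !inE.
have card_diag : #|[set p : 'I_N * 'I_N | p.1 == p.2]| = N.
  suff -> : [set p : 'I_N * 'I_N | p.1 == p.2] = [set (i, i) | i : 'I_N].
    by rewrite card_imset ?card_ord // => i j [].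
  apply/setP => -[i j]; rewrite !inE /=.
  by apply/eqP/imsetP => [<-|[k _ [-> ->]]]; [exists i|].
have card_geq : #|~: LT| = #|[set p : 'I_N * 'I_N | p.2 < p.1]| + N.
  rewrite -[X in _ = _ + X]card_diag -(cardsID [set p : 'I_N * 'I_N | p.2 < p.1] (~: LT)).
  congr (_ + _); apply: eq_card => -[i j]; rewrite !inE /= -?leqNgt.
    by case: ltngtP.
  by rewrite -eqn_leq.
by have := cardsC LT; rewrite card_prod card_ord card_geq card_gtn; lia.
Qed.

Lemma card_cut_pairs col :
  4 * #|[set p : 'I_N * 'I_N | (p.1 < p.2) && (col p.1 != col p.2)]| <= N ^ 2.
Proof.
set cut := [set p | _]; set A := [set i | col i].
pose orient (p : 'I_N * 'I_N) := if col p.1 then p else (p.2, p.1).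
have orient_inj : {in cut &, injective orient}.
  move=> [i j] [k l]; rewrite !inE /orient /= => /andP[ltij _] /andP[ltkl _].
  by case: (col i); case: (col k) => -[eq1 eq2]; move: ltij ltkl; rewrite eq1 eq2 //; lia.
have sub_cut : orient @: cut \subset setX A (~: A).
  apply/subsetP => q /imsetP[[i j] cut_ij eq_q]; rewrite eq_q; move: cut_ij.
  by rewrite !inE /orient; case: ifP => /= ->; case: (col j); rewrite ?andbF.
rewrite -(card_in_imset orient_inj).
apply: (@leq_trans (4 * #|setX A (~: A)|)); first by rewrite leq_mul2l subset_leq_card.
rewrite cardsX; apply: leq_trans (leq_of_leqif (nat_AGM2 #|A| #|~: A|)) _.
by rewrite cardsC card_ord.
Qed.

Lemma exists_free_pair d (B : {set 'I_N * 'I_N}) col :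
  4 * (N + d) <= N ^ 2 -> #|B| < d ->
  exists i j : 'I_N, [/\ i < j, (i, j) \notin B & col i == col j].
Proof.
move=> le_Nd ltBd.
have [/existsP[i /existsP[j /and3P[? ? ?]]] | /existsPn nofree] :=
  boolP [exists i : 'I_N, exists j : 'I_N, [&& i < j, (i, j) \notin B & col i == col j]].
  by exists i, j.
exfalso; have := card_cut_pairs col; have := card_ltn_pairs.
set LT := [set p | _ < _]; set cut := [set p | _ && _] => card_LT card_cut.
have sub_lt : LT \subset B :|: cut.
  apply/subsetP => -[i j]; rewrite !inE /= => ltij; rewrite ltij /=.
  by have /existsPn/(_ j) := nofree i; rewrite ltij /= negb_and !negbK.
have := leq_trans (subset_leq_card sub_lt) (leq_card_setU B cut).
move: le_Nd card_cut card_LT; rewrite -!mulnn -mul2n.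
move: #|LT| #|cut| #|B| ltBd => L C BB; lia.
Qed.

End PairCounting.

Section Cone.
Variables (N : nat) (e : rel 'I_N).

Definition cone : rel 'I_N.+1 := fun a b =>
  (a != b) && if (unlift ord0 a, unlift ord0 b) is (Some i, Some j) then e i j else true.

Lemma cone_lift i j : cone (lift ord0 i) (lift ord0 j) = (i != j) && e i j.
Proof. by rewrite /cone !liftK (inj_eq (@lift_inj _ ord0)). Qed.

Lemma cone0 a : cone ord0 a = (a != ord0).
Proof. by rewrite /cone unlift_none andbT eq_sym. Qed.

Lemma cone_simple : symmetric e -> simple_graph cone.
Proof.
move=> sym_e; split=> [a b|a]; last by rewrite /cone eqxx.
rewrite /cone eq_sym; congr (_ && _).
by case: (unlift ord0 a) => [i|]; case: (unlift ord0 b) => [j|].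
Qed.

Lemma cone_connected : symmetric e -> connected_graph cone.
Proof.
move=> sym_e; have [sym_cone _] := cone_simple sym_e.
have to0 a : connect cone a ord0.
  have [->|neq_a0] := eqVneq a ord0; first exact: connect0.
  by apply: connect1; rewrite sym_cone cone0.
by move=> a b; apply: connect_trans (to0 a) _; rewrite sym_connect_sym.
Qed.

Lemma num_edges_cone : N + num_edges e <= num_edges cone.
Proof.
rewrite /num_edges.
pose spokes := [set ((ord0 : 'I_N.+1), lift ord0 i) | i : 'I_N].
pose rim := [set (lift ord0 p.1, lift ord0 p.2)
             | p in [set p : 'I_N * 'I_N | (p.1 < p.2) && e p.1 p.2]].
have lift0_inj : injective (@lift N.+1 ord0) := @lift_inj _ ord0.
have card_spokes : #|spokes| = N.
  by rewrite card_imset ?card_ord // => i j /(congr1 snd) /lift0_inj.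
have card_rim : #|rim| = #|[set p : 'I_N * 'I_N | (p.1 < p.2) && e p.1 p.2]|.
  rewrite card_imset // => -[i1 i2] [j1 j2] /eqP.
  by rewrite !xpair_eqE /= !(inj_eq lift0_inj) => /andP[/eqP-> /eqP->].
have disj : [disjoint spokes & rim].
  apply/pred0P => q; apply/andP => -[/imsetP[i _ ->] /imsetP[p _]].
  by move/(congr1 (val \o fst)) => /=; rewrite /bump.
have := (leq_card_setU spokes rim).2; rewrite disj card_spokes card_rim => /eqP <-.
apply/subset_leq_card/subsetP => _ /setUP[/imsetP[i _ ->]|/imsetP[[i j] + ->]];
  rewrite !inE /= ?cone0 ?cone_lift //.
by case/andP=> ltij ->; rewrite /bump /= !add1n ltnS ltij andbT neq_ltn ltij.
Qed.


End Cone.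

Notation red s := (has_edge s true).
Notation blue s := (has_edge s false).

Definition add_edge (s : state) (x y : nat) (c : bool) : state :=
  (minn x y, maxn x y, c) :: s.

Lemma has_edgeC s c x y : has_edge s c x y = has_edge s c y x.
Proof. by rewrite /has_edge minnC maxnC. Qed.

Lemma has_edge_add s x y c c' a b :
  has_edge (add_edge s x y c) c' a b =
  [&& c' == c & [&& a == x & b == y] || [&& a == y & b == x]] || has_edge s c' a b.
Proof.
rewrite /has_edge in_cons; congr (_ || _); rewrite !xpair_eqE andbC.
by congr (_ && _); lia.
Qed.

Lemma add_edge_sub s x y c : {subset s <= add_edge s x y c}.
Proof. by move=> e se; rewrite in_cons se orbT. Qed.

Lemma sub_has_edge s s' c x y :
  {subset s <= s'} -> has_edge s c x y -> has_edge s' c x y.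
Proof. by move=> sub_s /sub_s. Qed.

Lemma has_edge_add_self s x y c : has_edge (add_edge s x y c) c x y.
Proof. by rewrite has_edge_add !eqxx. Qed.

Lemma has_edge_add_other s x y c c' a b :
  c' != c -> has_edge (add_edge s x y c) c' a b = has_edge s c' a b.
Proof. by rewrite has_edge_add => /negbTE->. Qed.

Lemma builder_wins_over H1 H2 t s : game_over H1 H2 s -> builder_wins H1 H2 t s.
Proof. by case: t => [|t] /=; left. Qed.

Lemma builder_wins_mono H1 H2 t t' s :
  t <= t' -> builder_wins H1 H2 t s -> builder_wins H1 H2 t' s.
Proof.
elim: t t' s => [|t IH] t' s le_tt'; first by case=> // ?; apply: builder_wins_over.
case: t' le_tt' => // t' le_tt'.
case=> [?|[u [v [ltuv [fresh_uv win]]]]]; first by left.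
by right; exists u, v; do 2!split => //; move=> c; apply: IH (win c).
Qed.

Lemma builder_wins_query H1 H2 t s x y :
  x != y -> ~~ red s x y -> ~~ blue s x y ->
  (forall c, builder_wins H1 H2 t (add_edge s x y c)) ->
  builder_wins H1 H2 t.+1 s.
Proof.
move=> /eqP neq_xy not_red not_blue win; right.
exists (minn x y), (maxn x y); split; first lia.
by split => //; apply/andP.
Qed.

Lemma uniq_cycle_copy s col c :
  cycle (has_edge s col) c -> uniq c -> contains_copy s col (@cycle_adj (size c)).
Proof.
move=> cyc_c uniq_c; set k := size c.
have edge_next (i : 'I_k) : has_edge s col (nth 0 c i) (nth 0 c (i.+1 %% k)).
  move: cyc_c; rewrite (cycle_path 0) => /(pathP 0) Rc.
  have [ltik | geik] := ltnP i.+1 k; first by rewrite modn_small //; apply: (Rc i.+1).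
  have eq_ik : i.+1 = k by have := ltn_ord i; lia.
  rewrite eq_ik modnn (_ : nth 0 c i = last 0 c); last by rewrite -nth_last; congr nth; lia.
  by apply: (Rc 0); rewrite -/k -eq_ik.
exists (fun i : 'I_k => nth 0 c i); split.
  by move=> i j /eqP; rewrite nth_uniq // => /eqP/val_inj.
move=> i j /orP[/eqP-> | /eqP->]; first exact: edge_next.
by rewrite has_edgeC edge_next.
Qed.

(* Loops are excluded so that an odd closed walk yields a cycle of length at
   least 3. *)
Definition red_graph s : rel nat := fun x y => (x != y) && red s x y.

Lemma red_graph_sym s : symmetric (red_graph s).
Proof. by move=> x y; rewrite /red_graph eq_sym has_edgeC. Qed.

Lemma red_graph_sub s s' : {subset s <= s'} -> subrel (red_graph s) (red_graph s').
Proof. by move=> sub_s x y /andP[neq_xy /(sub_has_edge sub_s) red_xy]; apply/andP. Qed.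

Lemma odd_closed_walk_copy s x : walk (red_graph s) x x true -> has_copy C_odd s true.
Proof.
case/closed_walk_odd_cycle=> c cyc_c /andP[uniq_c odd_c].
have ge3_c : 3 <= size c.
  case: c cyc_c odd_c {uniq_c} => [|y [|z c]] //=; first by rewrite /red_graph eqxx.
  by case: c => //=; lia.
exists (size c), (@cycle_adj (size c)); split=> //.
by apply: uniq_cycle_copy => //; apply: sub_cycle cyc_c => y z /andP[].
Qed.

Lemma even_walk_add_red_copy s x y :
  walk (red_graph s) x y false -> x != y -> has_copy C_odd (add_edge s x y true) true.
Proof.
move=> wxy neq_xy; apply: (@odd_closed_walk_copy _ x).
have wxy' := sub_walk (red_graph_sub (@add_edge_sub s x y true)) wxy.
apply: (walk_cat wxy' (walk1 _)).
by rewrite /red_graph eq_sym neq_xy has_edgeC has_edge_add_self.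
Qed.

Lemma cone_copy N s col h (g : 'I_N -> nat) :
  injective g -> (forall i, g i != h) -> (forall i, has_edge s col h (g i)) ->
  contains_copy s col (cone (fun i j => has_edge s col (g i) (g j))).
Proof.
move=> g_inj g_neq_h hub.
exists (fun a => if unlift ord0 a is Some i then g i else h); split.
  move=> a b; case: unliftP => [i ->|->]; case: unliftP => [j ->|->] //.
  - by move/g_inj->.
  - by move/eqP; rewrite (negbTE (g_neq_h i)).
  - by move/esym/eqP; rewrite (negbTE (g_neq_h j)).
move=> a b /andP[]; case: unliftP => [i ->|->]; case: unliftP => [j ->|->] //=.
by rewrite has_edgeC.
Qed.

Lemma blue_cone_Con_copy N s m h (g : 'I_N -> nat) :
  injective g -> (forall i, g i != h) -> (forall i, blue s h (g i)) ->
  m <= N + num_edges (fun i j => blue s (g i) (g j)) -> has_copy (Con N.+1 m) s false.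
Proof.
move=> g_inj g_neq_h hub le_m.
have sym_blue : symmetric (fun i j => blue s (g i) (g j)) by move=> i j; rewrite has_edgeC.
exists N.+1, (cone (fun i j => blue s (g i) (g j))); split; last exact: cone_copy.
split=> //; [exact: cone_simple | exact: cone_connected | exact: leq_trans (num_edges_cone _)].
Qed.

Section HubStrategy.
Variables (N d m h : nat) (g : 'I_N -> nat).
Hypotheses (N_large : 4 * (N + d) <= N ^ 2) (le_m : m <= N + d).
Hypotheses (g_inj : injective g) (g_neq_h : forall i, g i != h).

Local Notation builder_wins := (builder_wins C_odd (Con N.+1 m)).

Definition nblue s := num_edges (fun i j => blue s (g i) (g j)).

Definition nclasses (lab : 'I_N -> 'I_N) := #|[set lab i | i : 'I_N]|.

Definition bipartition s (lab : 'I_N -> 'I_N) (par : 'I_N -> bool) :=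
  (forall i j, red s (g i) (g j) -> lab i = lab j /\ par i != par j) /\
  (forall i j, lab i = lab j -> walk (red_graph s) (g i) (g j) (par i (+) par j)).

Lemma bipartition_blue s lab par x y :
  bipartition s lab par -> bipartition (add_edge s x y false) lab par.
Proof.
case=> red_ok walk_ok; split=> [i j|i j /walk_ok].
  by rewrite has_edge_add_other //; apply: red_ok.
by apply: sub_walk; apply/red_graph_sub/add_edge_sub.
Qed.

Lemma nblue_add s (i j : 'I_N) :
  i < j -> ~~ blue s (g i) (g j) -> nblue s < nblue (add_edge s (g i) (g j) false).
Proof.
move=> ltij not_blue; rewrite /nblue /num_edges [X in _ < X](cardsD1 (i, j)).
rewrite inE /= ltij has_edge_add_self add1n ltnS.
apply/subset_leq_card/subsetP => -[k l]; rewrite !inE /= => /andP[ltkl blue_kl].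
rewrite ltkl (sub_has_edge (@add_edge_sub _ _ _ _) blue_kl) !andbT.
by apply: (contraNneq _ not_blue) => -[<- <-].
Qed.

Section Merge.
Variables (s : state) (lab : 'I_N -> 'I_N) (par : 'I_N -> bool) (i j : 'I_N).
Hypotheses (neq_lab : lab i != lab j) (bip : bipartition s lab par).

Let flip k := (lab k == lab j) && (par i == par j).
Definition merge_lab k := if lab k == lab j then lab i else lab k.
Definition merge_par k := par k (+) flip k.
Let s' := add_edge s (g i) (g j) true.

Lemma nclasses_merge : nclasses merge_lab < nclasses lab.
Proof.
have lab_j : lab j \in [set lab k | k : 'I_N] by apply: imset_f.
rewrite /nclasses [X in _ < X](cardsD1 (lab j)) lab_j add1n ltnS.
apply/subset_leq_card/subsetP => _ /imsetP[k _ ->]; rewrite in_setD1 /merge_lab.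
by have [_|neq_kj] := eqVneq (lab k) (lab j); rewrite ?neq_lab ?neq_kj /= imset_f.
Qed.

Let lift_walk x y b : walk (red_graph s) x y b -> walk (red_graph s') x y b.
Proof. exact/sub_walk/red_graph_sub/add_edge_sub. Qed.

Lemma walk_merge a b : lab a = lab j -> lab b = lab i ->
  walk (red_graph s') (g a) (g b) (merge_par a (+) merge_par b).
Proof.
case: bip => _ walk_ok lab_a lab_b.
have w_aj := lift_walk (walk_ok _ _ lab_a).
have w_ib := lift_walk (walk_ok _ _ (esym lab_b)).
have w_ji : walk (red_graph s') (g j) (g i) true.
  apply: walk1; rewrite /red_graph has_edgeC has_edge_add_self andbT (inj_eq g_inj).
  by apply: contraNneq neq_lab => ->.
have := walk_cat (walk_cat w_aj w_ji) w_ib; congr walk.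
rewrite /merge_par /flip lab_a lab_b eqxx eq_sym (negbTE neq_lab) /=.
by case: (par a); case: (par b); case: (par i); case: (par j).
Qed.

Lemma bipartition_merge : bipartition s' merge_lab merge_par.
Proof.
have [red_ok walk_ok] := bip; split=> [a b|a b].
  rewrite has_edge_add !(inj_eq g_inj) => /orP[/andP[_ new_edge] |].
    case/orP: new_edge => /andP[/eqP-> /eqP->];
      rewrite /merge_lab /merge_par /flip eqxx (negbTE neq_lab) /=;
      by split=> //; case: (par i); case: (par j).
  case/red_ok=> eq_lab neq_par; rewrite /merge_lab /merge_par /flip eq_lab.
  by split=> //; move: neq_par; case: (par a); case: (par b); case: (_ && _).
rewrite /merge_lab; case: eqP => lab_a; case: eqP => lab_b.
- move=> _; have := lift_walk (walk_ok _ _ (etrans lab_a (esym lab_b))); congr walk.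
  by rewrite /merge_par /flip lab_a lab_b eqxx; case: (par a); case: (par b); case: (_ == _).
- by move/esym; apply: walk_merge.
- by move=> lab_ba; rewrite addbC; apply: walk_sym (red_graph_sym _) _; apply: walk_merge.
- move=> eq_lab; have := lift_walk (walk_ok _ _ eq_lab); congr walk.
  by rewrite /merge_par /flip (introF eqP lab_a) (introF eqP lab_b) !addbF.
Qed.

End Merge.

Lemma nblue_add_red s x y : nblue (add_edge s x y true) = nblue s.
Proof. by apply: eq_card => p; rewrite !inE has_edge_add_other. Qed.

Lemma hub_Con_copy s :
  (forall i, blue s h (g i)) -> d <= nblue s -> has_copy (Con N.+1 m) s false.
Proof.
move=> hub enough; apply: blue_cone_Con_copy g_inj g_neq_h hub _.
by apply: leq_trans le_m _; rewrite leq_add2l.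
Qed.

Lemma hub_free_pair s lab par : bipartition s lab par -> nblue s < d ->
  exists i j : 'I_N, [/\ i < j, ~~ red s (g i) (g j), ~~ blue s (g i) (g j) & par i == par j].
Proof.
move=> bip few; have [i [j [ltij free_ij par_ij]]] :=
  exists_free_pair (B := [set p : 'I_N * 'I_N | (p.1 < p.2) && blue s (g p.1) (g p.2)])
                   par N_large few.
exists i, j; split=> //; last by move: free_ij; rewrite inE ltij.
by apply/negP => /bip.1[_]; rewrite par_ij.
Qed.

Lemma builder_wins_hub t s lab par :
  bipartition s lab par -> (forall i, blue s h (g i)) ->
  nclasses lab + (d - nblue s) <= t.+1 -> builder_wins t s.
Proof.
elim: t s lab par => [|t IHt] s lab par bip hub le_t;
  have [enough|few] := leqP d (nblue s); try by apply/builder_wins_over; right; apply: hub_Con_copy.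
  have [i _] := hub_free_pair bip few.
  have : 0 < nclasses lab by rewrite card_gt0; apply/set0Pn; exists (lab i); apply: imset_f.
  by move: le_t few; lia.
have [i [j [ltij not_red not_blue par_ij]]] := hub_free_pair bip few.
have neq_ij : g i != g j by rewrite (inj_eq g_inj) neq_ltn ltij.
have hub' x y c k : blue (add_edge s x y c) h (g k).
  exact/(sub_has_edge _ (hub k))/add_edge_sub.
apply: (builder_wins_query neq_ij not_red not_blue) => -[].
  have [eq_lab|neq_lab] := eqVneq (lab i) (lab j).
    apply/builder_wins_over; left; apply: even_walk_add_red_copy neq_ij.
    by rewrite -(addbb (par i)) {2}(eqP par_ij); apply: bip.2.
  apply: IHt (bipartition_merge neq_lab bip) (hub' _ _ _) _.
  by rewrite nblue_add_red; have := nclasses_merge neq_lab; lia.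
apply: IHt (bipartition_blue _ _ bip) (hub' _ _ _) _.
by have := nblue_add ltij not_blue; lia.
Qed.

End HubStrategy.

Lemma builder_wins_fan H2 h t ys s :
  uniq (h :: ys) ->
  (forall y, y \in ys -> ~~ red s h y && ~~ blue s h y) ->
  (forall y, y \in ys -> walk (red_graph s) h y false) ->
  (forall s', {subset s <= s'} -> (forall x y, red s' x y -> red s x y) ->
     (forall y, y \in ys -> blue s' h y) -> builder_wins C_odd H2 t s') ->
  builder_wins C_odd H2 (size ys + t) s.
Proof.
elim: ys s => [|y ys IHys] s uniq_hys fresh even_walk finish.
  by apply: finish => // x y; rewrite in_nil.
rewrite addSn; move: uniq_hys; rewrite /= in_cons negb_or -andbA.
case/and4P=> neq_hy h_ys y_ys uniq_ys.
have /andP[not_red not_blue] := fresh y (mem_head _ _).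
have sub_ys : {subset ys <= y :: ys} by move=> z ys_z; rewrite in_cons ys_z orbT.
apply: (builder_wins_query neq_hy not_red not_blue) => -[].
  by apply/builder_wins_over; left; apply/even_walk_add_red_copy/neq_hy/even_walk/mem_head.
set s1 := add_edge s h y false; have sub_s1 : {subset s <= s1} by apply: add_edge_sub.
have red_s1 x z : red s1 x z = red s x z by rewrite has_edge_add_other.
apply: IHys => [||y' ys_y'|s' sub_s' red_s' blue_s'].
- by rewrite /= h_ys.
- move=> y' ys_y'; have /andP[not_red' not_blue'] := fresh y' (sub_ys _ ys_y').
  rewrite red_s1 not_red' has_edge_add (negbTE not_blue') orbF /=.
  apply/negP => /orP[/andP[_ /eqP eq_y] | /andP[/eqP eq_h _]].
    by move: y_ys; rewrite -eq_y ys_y'.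
  by move: neq_hy; rewrite eq_h eqxx.
- by apply/(sub_walk (red_graph_sub sub_s1))/even_walk/sub_ys.
apply: finish => [e /sub_s1/sub_s' //|x z /red_s'|y']; first by rewrite red_s1.
by rewrite in_cons => /predU1P[->|/blue_s'//]; apply/sub_s'/has_edge_add_self.
Qed.

(* Builder has queried the edges 0 x for x = 1, ..., k; Painter coloured
   those with x in xs blue and those with x in bs red. *)
Definition root_star (s : state) (xs bs : seq nat) :=
  perm_eq (xs ++ bs) (iota 1 (size (xs ++ bs))) /\
  s =i [seq (0, x, false) | x <- xs] ++ [seq (0, x, true) | x <- bs].

Section RootStar.
Variables (s : state) (xs bs : seq nat).
Hypothesis star : root_star s xs bs.

Lemma root_star_uniq : uniq (xs ++ bs).
Proof. by rewrite (perm_uniq star.1) iota_uniq. Qed.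

Lemma root_star_pos x : x \in xs ++ bs -> 0 < x.
Proof. by rewrite (perm_mem star.1) mem_iota => /andP[]. Qed.

Lemma root_star_edge c x y : has_edge s c x y -> (x == 0) || (y == 0).
Proof.
rewrite /has_edge star.2 mem_cat => /orP[] /mapP[z _ [E _ _]]; lia.
Qed.

Lemma root_star_blue x : x \in xs -> blue s 0 x.
Proof. by move=> xs_x; rewrite /has_edge star.2 min0n max0n mem_cat map_f. Qed.

Lemma root_star_red x : x \in bs -> red s 0 x.
Proof. by move=> bs_x; rewrite /has_edge star.2 min0n max0n mem_cat map_f ?orbT. Qed.

Lemma root_star_fresh c : ~~ has_edge s c 0 (size (xs ++ bs)).+1.
Proof.
rewrite /has_edge star.2 min0n max0n mem_cat; apply/negP => /orP[] /mapP[x x_in [eq_x _]].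
all: have := perm_mem star.1 x; rewrite mem_cat x_in ?orbT mem_iota -eq_x; lia.
Qed.

Lemma root_star_walk x y : x \in bs -> y \in bs -> walk (red_graph s) x y false.
Proof.
move=> bs_x bs_y; have [<-|neq_xy] := eqVneq x y; first exact: walk0.
have pos z : z \in bs -> 0 < z by move=> bs_z; apply: root_star_pos; rewrite mem_cat bs_z orbT.
apply: (walk_cat (b := true) (c := true) (y := 0)); apply: walk1; rewrite /red_graph -?lt0n.
  by rewrite has_edgeC root_star_red // pos.
by rewrite eq_sym -lt0n root_star_red // pos.
Qed.

End RootStar.

Lemma root_star_add s xs bs c : root_star s xs bs ->
  root_star (add_edge s 0 (size (xs ++ bs)).+1 c)
    (if c then xs else (size (xs ++ bs)).+1 :: xs)
    (if c then (size (xs ++ bs)).+1 :: bs else bs).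
Proof.
move=> [perm_s mem_s]; set k := size (xs ++ bs).
have iotaS : iota 1 k.+1 = rcons (iota 1 k) k.+1 by rewrite -cats1 -(addn1 k) iotaD add1n addn1.
have perm_new : perm_eq ((if c then xs else k.+1 :: xs) ++ (if c then k.+1 :: bs else bs))
                        (k.+1 :: xs ++ bs).
  by case: c => //; rewrite -cat1s perm_catCA.
split; first rewrite (perm_size perm_new) (permPl perm_new) iotaS.
  by rewrite perm_sym perm_rcons perm_cons perm_sym.
move=> e; rewrite /add_edge min0n max0n in_cons mem_s !mem_cat.
by case: c {perm_new}; rewrite /= in_cons; [exact: orbCA | exact: orbA].
Qed.

Section Strategy.
Variables (N d m : nat).
Hypotheses (N_pos : 0 < N) (N_large : 4 * (N + d) <= N ^ 2) (le_m : m <= N + d).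

Local Notation builder_wins := (builder_wins C_odd (Con N.+1 m)).

Lemma builder_wins_blue_root s xs bs t :
  root_star s xs bs -> size xs = N -> N + d <= t -> builder_wins t s.
Proof.
move=> star size_xs le_t; pose g (i : 'I_N) := nth 0 xs i.
have uniq_xs : uniq xs by have := root_star_uniq star; rewrite cat_uniq => /andP[].
have xs_g i : g i \in xs by rewrite mem_nth // size_xs.
have pos_g i : 0 < g i by apply: (root_star_pos star); rewrite mem_cat xs_g.
have g_neq0 i : g i != 0 by rewrite -lt0n.
have g_inj : injective g by apply: nth_ord_inj size_xs.
apply: (builder_wins_hub N_large le_m g_inj g_neq0 (lab := id) (par := fun=> false)).
- split=> [i j /(root_star_edge star)|i j ->]; last exact: walk0.
  by rewrite (negbTE (g_neq0 i)) (negbTE (g_neq0 j)).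
- by move=> i; apply: (root_star_blue star (xs_g i)).
- have : nclasses (@id 'I_N) <= N by rewrite -[X in _ <= X]card_ord max_card.
  lia.
Qed.

Lemma builder_wins_red_root s xs bs t :
  root_star s xs bs -> size bs = N.+1 -> N + d <= t -> builder_wins t s.
Proof.
case: bs => // h ys star [size_ys] le_t.
have uniq_hys : uniq (h :: ys) by have := root_star_uniq star; rewrite cat_uniq => /and3P[].
have pos x : x \in h :: ys -> 0 < x.
  by move=> hys_x; apply: (root_star_pos star); rewrite mem_cat hys_x orbT.
have ys_hys : {subset ys <= h :: ys} by move=> y ys_y; rewrite in_cons ys_y orbT.
have no_edge c x y : x \in h :: ys -> y \in h :: ys -> ~~ has_edge s c x y.
  move=> /pos + /pos; rewrite !lt0n => nx ny.
  by apply/negP => /(root_star_edge star); rewrite (negbTE nx) (negbTE ny).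
have -> : t = size ys + (t - N) by lia.
apply: (builder_wins_fan (h := h)) => // [y ys_y|y ys_y|s' sub_s' red_s' blue_s'].
- by rewrite !no_edge ?mem_head ?ys_hys.
- exact: (root_star_walk star (mem_head _ _) (ys_hys _ ys_y)).
pose g (i : 'I_N) := nth 0 ys i; pose i0 := Ordinal N_pos.
have ys_g i : g i \in ys by rewrite mem_nth // size_ys.
have g_neq_h i : g i != h by apply: contraTneq (ys_g i) => ->; case/andP: uniq_hys.
have g_inj : injective g by apply: nth_ord_inj size_ys; case/andP: uniq_hys.
apply: (builder_wins_hub N_large le_m g_inj g_neq_h (lab := fun=> i0) (par := fun=> false)).
- split=> [i j /red_s' red_ij|i j _].
    by have := no_edge true _ _ (ys_hys _ (ys_g i)) (ys_hys _ (ys_g j)); rewrite red_ij.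
  by apply/(sub_walk (red_graph_sub sub_s'))/(root_star_walk star); apply/ys_hys.
- by move=> i; apply/blue_s'.
- have : nclasses (fun=> i0) <= 1.
    by rewrite -(cards1 i0); apply/subset_leq_card/subsetP => _ /imsetP[_ _ ->]; rewrite inE.
  lia.
Qed.

Lemma builder_wins_root_star k s xs bs :
  root_star s xs bs -> size (xs ++ bs) = k -> size xs < N -> size bs <= N ->
  builder_wins (3 * N + d - k) s.
Proof.
have [r] := ubnP (2 * N - k); elim: r k s xs bs => // r IHr k s xs bs.
move=> lt_r star size_k lt_xs le_bs.
have -> : 3 * N + d - k = (3 * N + d - k.+1).+1 by move: size_k; rewrite size_cat; lia.
have fresh c := root_star_fresh star c; rewrite size_k in fresh.
apply: (builder_wins_query _ (fresh true) (fresh false)) => // c.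
have star' := root_star_add c star; rewrite size_k in star'.
have size' : size ((if c then xs else k.+1 :: xs) ++ (if c then k.+1 :: bs else bs)) = k.+1.
  by case: c {star'}; rewrite -size_k !size_cat /= ?addnS.
have lt_r' : 2 * N - k.+1 < r by move: size_k; rewrite size_cat; lia.
case: c star' size' => star' size' /=.
- have [lt_bs'|eq_bs'] := ltnP (size bs) N; first exact: IHr star' size' lt_xs lt_bs'.
  by apply: builder_wins_red_root star' _ _ => /=; move: size_k; rewrite size_cat; lia.
- have [lt_xs'|eq_xs'] := ltnP (size xs).+1 N; first exact: IHr star' size' lt_xs' le_bs.
  by apply: builder_wins_blue_root star' _ _ => /=; move: size_k; rewrite size_cat; lia.
Qed.

End Strategy.

Theorem theorem3 :
  exists C : R, Rlt (IZR 0) C /\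
    forall n m : nat, 3 <= n -> n - 1 <= m -> 4 * m <= (n - 1) ^ 2 ->
      exists t : nat,
        Rle (INR t)
            (Rplus (Rplus (INR n) (Rmult (IZR 2) (INR m)))
                   (Rmult C (sqrt (Rplus (Rminus (INR m) (INR n)) (IZR 1))))) /\
        online_ramsey_le C_odd (Con n m) t.
Proof.
exists R1; split=> [|n m le3n le_nm le_m4]; first lra.
exists (n + 2 * m); split.
  rewrite -[n + 2 * m]/(Nat.add n (Nat.mul 2 m)) plus_INR mult_INR.
  by rewrite (_ : INR 2 = IZR 2) //; have := sqrt_pos (INR m - INR n + 1); lra.
have -> : n = n.-1.+1 by lia.
apply: (@builder_wins_mono _ _ (3 * n.-1 + (m - n.-1) - 0)); first lia.
apply: (@builder_wins_root_star n.-1 (m - n.-1) m _ _ _ 0 [::] [::] [::]) => //.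
all: move: le_m4; rewrite -!mulnn subn1 /=; lia.
Qed.
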